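(* With $D$, $S$ and $A$ as in the context, the restriction map $\mathrm{Res}:\mathrm{Der}(D,A)\to\mathrm{Der}(\Phi(D),S)$, $\tau\mapsto\tau|_{\Phi(D)}$, is well defined and surjective.
   Context: $p$ is an odd prime, $d\geq 2$. $D=\langle y_1,\dots,y_d\rangle$ is a finite $p$-group of exponent $p$ and class $2$ with $|D/\Phi(D)|=p^d$ and $|\Phi(D)/\gamma_3(D)|=p^{\binom d2}$. $S=\langle a\rangle\cong\mathrm{F}_p$ is the trivial $D$-module; $\delta_j:D\to S$ is the homomorphism with $\delta_j(y_j)=a$, $\delta_j(y_i)=0$ ($i\ne j$). $A=S\oplus\bigoplus_{i=1}^d\langle r_i\rangle$, $\langle r_i\rangle\cong\mathrm{F}_p$, with action $(la+\sum_ik_ir_i)^g=la+\sum_ik_i(r_i-\delta_i(g))$. Since $\Phi(D)$ acts trivially on $S$, $\mathrm{Der}(\Phi(D),S)=\mathrm{Hom}(\Phi(D),S)$. *)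

From HB Require Import structures.
From mathcomp Require Import all_boot all_order all_algebra all_fingroup all_solvable.
From mathcomp Require Import maximal.
Set Implicit Arguments. Unset Strict Implicit. Unset Printing Implicit Defensive.
Import GRing.Theory.
Local Open Scope ring_scope.

Definition is_derivation (gT : finGroupType) (G : {set gT}) (V : zmodType)
  (act : V -> gT -> V) (f : gT -> V) : Prop :=
  forall g h, g \in G -> h \in G -> f (g * h)%g = act (f g) h + f h.

(* The module A = S (+) (+)_i <r_i> over F_p, coordinates (l, k):
   l a + sum_i k_i r_i  is represented by  (l, k). *)
Definition Amod (p d : nat) : zmodType := ('F_p * 'rV['F_p]_d)%type.

(* (l a + sum k_i r_i)^g = l a + sum k_i (r_i - delta_i(g))
                       = (l - sum_i k_i delta_i(g)) a + sum k_i r_i *)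
Definition Aact (p d : nat) (gT : finGroupType) (delta : 'I_d -> gT -> 'F_p)
  (v : Amod p d) (g : gT) : Amod p d :=
  (v.1 - \sum_(i < d) v.2 0 i * delta i g, v.2).

Definition inS (p d : nat) (l : 'F_p) : Amod p d := (l, 0).

Definition triv_act (p : nat) (gT : finGroupType) (v : 'F_p) (g : gT) : 'F_p := v.

From HB Require Import structures.
From mathcomp Require Import all_boot all_order all_algebra all_fingroup all_solvable.
From mathcomp Require Import maximal.

(* The r-coordinates of a derivation tau : D -> A form a homomorphism from D to
   F_p^d, so they vanish on Phi(D) = D' Mho^1(D); on Phi(D) the action on the
   S-coordinate is then trivial and tau restricts to a homomorphism into S.
   Conversely, write g = c(g) w(g) with w(g) = prod_i y_i^(delta_i g) and
   c(g) in D', which is central since D has class 2.  Collecting w(g) w(h)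
   gives c(gh) = c(g) c(h) z with
     sigma(z) = sum_(j < i) sigma[y_i, y_j] delta_i(g) delta_j(h),
   a bilinear form in delta(g), delta(h).  Hence g |-> sigma(c(g)) fails to be
   a homomorphism by exactly this form, which the action on A absorbs once the
   r-coordinates of tau(g) are chosen as -sum_(b > a) sigma[y_b, y_a] delta_b(g). *)

Set Implicit Arguments. Unset Strict Implicit. Unset Printing Implicit Defensive.
Import GRing.Theory.
Local Open Scope group_scope.
Local Open Scope ring_scope.

Section AdditiveMorphism.
Variables (gT : finGroupType) (G : {group gT}) (V : zmodType) (phi : gT -> V).
Hypothesis phiM : {in G &, {morph phi : x y / (x * y)%g >-> x + y}}.

Lemma gaddm1 : phi 1%g = 0.
Proof. by apply: (addrI (phi 1%g)); rewrite -phiM ?mulg1 ?addr0. Qed.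

Lemma gaddmX x n : x \in G -> phi (x ^+ n)%g = phi x *+ n.
Proof.
move=> Gx; elim: n => [|n IHn]; first by rewrite expg0 gaddm1.
by rewrite expgS phiM ?groupX // IHn mulrS.
Qed.

Lemma gaddmV x : x \in G -> phi x^-1%g = - phi x.
Proof.
by move=> Gx; apply: (addIr (phi x)); rewrite -phiM ?groupV // mulVg gaddm1 addNr.
Qed.

Lemma gaddm_prod I r (P : pred I) (F : I -> gT) :
  (forall i, P i -> F i \in G) ->
  phi (\prod_(i <- r | P i) F i)%g = \sum_(i <- r | P i) phi (F i).
Proof.
move=> GF; suff [] : (\prod_(i <- r | P i) F i)%g \in G /\
    phi (\prod_(i <- r | P i) F i)%g = \sum_(i <- r | P i) phi (F i) by [].
elim/big_rec2: _ => [|i x v Pi [Gx <-]]; first by rewrite group1 gaddm1.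
by rewrite groupM ?GF // phiM ?GF.
Qed.

Lemma gaddmR x y : x \in G -> y \in G -> phi [~ x, y]%g = 0.
Proof.
move=> Gx Gy; rewrite /commg /conjg !phiM ?(groupM, groupV) // !gaddmV //.
by rewrite addrCA addKr addNr.
Qed.

Lemma gaddm_Phi (p : nat) : p.-group G -> (forall v : V, v *+ p = 0) ->
  {in 'Phi(G), forall x, phi x = 0}.
Proof.
move=> pG pV; pose K := [set x in G | phi x == 0].
have gK : group_set K.
  apply/group_setP; split=> [|x y]; first by rewrite inE group1 gaddm1 eqxx.
  rewrite !inE => /andP[Gx /eqP phix] /andP[Gy /eqP phiy].
  by rewrite groupM // phiM // phix phiy addr0 eqxx.
suff /subsetP sPhiK : 'Phi(G) \subset Group gK.
  by move=> x /sPhiK; rewrite inE => /andP[_ /eqP].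
rewrite (Phi_joing pG) join_subG (MhoE 1 pG) !gen_subG; apply/andP; split.
  apply/subsetP => _ /imset2P[x y Gx Gy ->].
  by rewrite inE groupR // gaddmR // eqxx.
apply/subsetP => _ /imsetP[x Gx ->].
by rewrite inE groupX // gaddmX // expn1 pV eqxx.
Qed.

End AdditiveMorphism.

Definition power_word (gT : finGroupType) (Y : nat -> gT) n (u : nat -> nat) :=
  (\prod_(i < n) Y i ^+ u i)%g.

Section PowerWords.
Variables (gT : finGroupType) (Y : nat -> gT).

Lemma power_wordS n u : power_word Y n.+1 u = (power_word Y n u * Y n ^+ u n)%g.
Proof. exact: big_ord_recr. Qed.

Lemma eq_power_word n u v : (forall i, (i < n)%N -> (Y i ^+ u i = Y i ^+ v i)%g) ->
  power_word Y n u = power_word Y n v.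
Proof. by move=> eq_uv; apply: eq_bigr => i _; apply: eq_uv. Qed.

Lemma power_word0 n u : (forall i, (i < n)%N -> u i = 0%N) -> power_word Y n u = 1%g.
Proof. by move=> u0; apply: big1 => i _; rewrite u0 ?expg0. Qed.

Lemma power_word_delta n k :
  (k < n)%N -> power_word Y n (fun j => nat_of_bool (j == k)) = Y k.
Proof.
elim: n => [//|m IHm] lt_k_m1; rewrite power_wordS.
case: (ltngtP k m) => [lt_km|lt_mk|<-].
- by rewrite IHm // mulg1.
- by rewrite ltnS leqNgt lt_mk in lt_k_m1.
- by rewrite expg1 power_word0 ?mul1g // => i /ltn_eqF ->.
Qed.

Lemma mem_power_word (G : {group gT}) n u :
  (forall i, Y i \in G) -> power_word Y n u \in G.
Proof. by move=> GY; apply: group_prod => i _; rewrite groupX. Qed.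

End PowerWords.

Section Collection.
Variables (gT : finGroupType) (D : {group gT}) (V : zmodType) (sigma : gT -> V).
Hypothesis cDD : D^`(1)%g \subset 'Z(D).
Hypothesis sigmaM : {in D^`(1)%g &, {morph sigma : x y / (x * y)%g >-> x + y}}.

Lemma der1_commute z x : z \in D^`(1)%g -> x \in D -> commute z x.
Proof. by move=> /(subsetP cDD) /centerP[_ cDz] /cDz. Qed.

Lemma gaddm_commgMr x : x \in D ->
  {in D &, {morph (fun g => sigma [~ x, g]) : g h / (g * h)%g >-> g + h}}.
Proof.
move=> Dx g h Dg Dh /=; have D'xg : [~ x, g] \in D^`(1)%g by rewrite mem_commg.
by rewrite commgMJ conjgE (der1_commute D'xg Dh) mulKg sigmaM ?mem_commg // addrC.
Qed.

Lemma collect_power_words (Y : nat -> gT) (u v : nat -> nat) n :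
    (forall i, Y i \in D) ->
  exists2 z, z \in D^`(1)%g &
    (power_word Y n u * power_word Y n v = power_word Y n (fun i => u i + v i)%N * z)%g
    /\ sigma z = \sum_(i < n) \sum_(j < i) sigma [~ Y i, Y j] *+ (u i * v j).
Proof.
move=> DY; elim: n => [|n [z D'z [uvE sigma_z]]].
  by exists 1%g; rewrite ?group1 // /power_word !big_ord0 mulg1 (gaddm1 sigmaM).
set w := power_word Y n v in uvE *; set a := (Y n ^+ u n)%g; set c := [~ a, w].
have Dw : w \in D by apply: mem_power_word.
have Da : a \in D by rewrite groupX.
have D'c : c \in D^`(1)%g by rewrite mem_commg.
exists (z * c)%g; first by rewrite groupM.
split.
  have Eaw : (a * w = w * a * c)%g by apply: commgC.
  clearbody c; rewrite !power_wordS -/w -/a expgD.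
  rewrite !mulgA -(mulgA (power_word Y n u)) Eaw !mulgA uvE -!mulgA; congr (_ * _)%g.
  rewrite (der1_commute D'c (groupX _ (DY n))) !mulgA; congr (_ * _)%g.
  by rewrite -mulgA (der1_commute D'z (groupM Da (groupX _ (DY n)))).
rewrite sigmaM // sigma_z big_ord_recr /=; congr (_ + _).
have D'Yw : [~ Y n, w] \in D^`(1)%g by rewrite mem_commg.
rewrite /c /a commXg; last exact/commute_sym/(der1_commute D'Yw (DY n)).
rewrite (gaddmX sigmaM) // (gaddm_prod (gaddm_commgMr (DY n))) => [|i _]; last by rewrite groupX.
rewrite -sumrMnl; apply: eq_bigr => j _.
by rewrite (gaddmX (gaddm_commgMr (DY n))) // mulnC mulrnA.
Qed.

End Collection.

Lemma derivation_Aact_Phi p d (gT : finGroupType) (D : {group gT})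
    (delta : 'I_d -> gT -> 'F_p) (tau : gT -> Amod p d) :
    prime p -> p.-group D -> is_derivation D (Aact delta) tau ->
  (forall x, x \in 'Phi(D) -> tau x = inS d (tau x).1) /\
  is_derivation 'Phi(D) (@triv_act p gT) (fun x => (tau x).1).
Proof.
move=> p_pr pD tauM.
have tau2M i : {in D &, {morph (fun g => (tau g).2 0 i) : g h / (g * h)%g >-> g + h}}.
  by move=> g h Dg Dh; rewrite /= tauM // /Aact /= mxE.
have tau2_Phi x : x \in 'Phi(D) -> (tau x).2 = 0.
  move=> Phi_x; apply/rowP => i; rewrite mxE.
  by apply: (gaddm_Phi (tau2M i) pD) => // v; rewrite -mulr_natr pchar_Fp_0 ?mulr0.
split=> [x Phi_x | g h Phi_g Phi_h]; first by rewrite /inS -(tau2_Phi x Phi_x); case: (tau x).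
have [Dg Dh] := (subsetP (Phi_sub D) g Phi_g, subsetP (Phi_sub D) h Phi_h).
rewrite tauM // /Aact /= tau2_Phi // big1 ?subr0 // => i _.
by rewrite mxE mul0r.
Qed.

Section LiftToDerivation.
Variables (p d : nat) (gT : finGroupType) (D : {group gT}).
Variables (y : 'I_d -> gT) (delta : 'I_d -> gT -> 'F_p) (sigma : gT -> 'F_p).
Hypotheses (p_pr : prime p) (expD : (exponent D %| p)%N).
Hypothesis cDD : D^`(1)%g \subset 'Z(D).
Hypothesis defD : D :=: <<[set y i | i : 'I_d]>>.
Hypothesis deltaM : forall j, {in D &, {morph delta j : g h / (g * h)%g >-> g + h}}.
Hypothesis delta_y : forall j i, delta j (y i) = (i == j)%:R.
Hypothesis sigmaM : {in 'Phi(D) &, {morph sigma : g h / (g * h)%g >-> g + h}}.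

Let pD : p.-group D.
Proof. by rewrite -pnat_exponent (pnat_dvd expD) ?pnat_id. Qed.

Let sD'Phi : D^`(1)%g \subset 'Phi(D).
Proof. by rewrite (Phi_joing pD) joing_subl. Qed.

Let sigmaM' : {in D^`(1)%g &, {morph sigma : g h / (g * h)%g >-> g + h}}.
Proof. by move=> g h /(subsetP sD'Phi) Phi_g /(subsetP sD'Phi) Phi_h; apply: sigmaM. Qed.

Let Dy i : y i \in D.
Proof. by rewrite defD mem_gen ?imset_f. Qed.

(* Indexing the generators by nat (padded with 1) lets power words over them
   be built by induction on their length. *)
Definition gen_seq i := oapp y 1%g (insub i).
Definition delta_exps g i := oapp (fun j => nat_of_ord (delta j g)) 0%N (insub i).
Definition normal_word g := power_word gen_seq d (delta_exps g).
Definition der1_part g := (g * (normal_word g)^-1)%g.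

Let Dgen_seq i : gen_seq i \in D.
Proof. by rewrite /gen_seq; case: insub => [j|] /=; rewrite ?group1 ?Dy. Qed.

Lemma normal_wordM g h : g \in D -> h \in D ->
  normal_word (g * h)%g = power_word gen_seq d (fun i => delta_exps g i + delta_exps h i)%N.
Proof.
move=> Dg Dh; apply: eq_power_word => i lt_id.
rewrite /delta_exps insubT /= -[RHS](expg_mod _ ((exponentP expD) _ (Dgen_seq i))).
rewrite deltaM //; congr (_ ^+ _)%g.
by rewrite -{1}(natr_Zp (delta _ g)) -{1}(natr_Zp (delta _ h)) -natrD val_Fp_nat.
Qed.

Lemma normal_word_gen i : normal_word (y i) = y i.
Proof.
rewrite /normal_word (eq_power_word (v := fun j => nat_of_bool (j == i))).
  by rewrite power_word_delta // /gen_seq valK.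
move=> j lt_jd; rewrite /delta_exps insubT /= delta_y val_Fp_nat // modn_small.
  by rewrite eq_sym -val_eqE.
by apply: leq_ltn_trans (prime_gt1 p_pr); case: (_ == _).
Qed.

Let delta_Phi j : {in 'Phi(D), forall x, delta j x = 0}.
Proof.
by apply: (gaddm_Phi (deltaM j) pD) => v; rewrite -mulr_natr pchar_Fp_0 ?mulr0.
Qed.

Lemma normal_word_Phi x : x \in 'Phi(D) -> normal_word x = 1%g.
Proof.
by move=> Phi_x; apply: power_word0 => i lt_id; rewrite /delta_exps insubT /= delta_Phi.
Qed.

Lemma der1_partM g h : g \in D -> h \in D -> der1_part h \in D^`(1)%g ->
  exists2 z, z \in D^`(1)%g & der1_part (g * h)%g = (der1_part g * der1_part h * z)%g
    /\ sigma z = \sum_(i < d) \sum_(j < i)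
                   sigma [~ gen_seq i, gen_seq j] *+ (delta_exps g i * delta_exps h j).
Proof.
move=> Dg Dh; rewrite /der1_part => D'ch.
have [z D'z [Wz sigma_z]] := collect_power_words cDD sigmaM'
  (delta_exps g) (delta_exps h) d Dgen_seq.
exists z => //; split => //.
rewrite normal_wordM // -(mulgK z (power_word _ _ _)) -Wz.
have Dw1 : normal_word g \in D by apply: mem_power_word.
have Dw2 : normal_word h \in D by apply: mem_power_word.
rewrite invMg invgK (der1_commute cDD D'z (groupVr (groupM Dw1 Dw2))).
have -> : (g * (normal_word g)^-1 * (h * (normal_word h)^-1) =
            g * (h * (normal_word h)^-1 * (normal_word g)^-1))%g.
  by rewrite -mulgA (der1_commute cDD D'ch (groupVr Dw1)).
by rewrite invMg !mulgA.
Qed.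

Lemma der1_part_mem g : g \in D -> der1_part g \in D^`(1)%g.
Proof.
pose K := [set g in D | der1_part g \in D^`(1)%g].
have gK : group_set K.
  apply/group_setP; split=> [|g1 g2].
    by rewrite inE group1 /der1_part normal_word_Phi ?group1 // invg1 mulg1 group1.
  rewrite !inE => /andP[Dg1 D'c1] /andP[Dg2 D'c2].
  have [z D'z [-> _]] := der1_partM Dg1 Dg2 D'c2.
  by rewrite (groupM Dg1 Dg2) (groupM (groupM D'c1 D'c2) D'z).
suff /subsetP sDK : D \subset Group gK by move=> /sDK; rewrite inE => /andP[].
rewrite {1}defD gen_subG; apply/subsetP => _ /imsetP[i _ ->].
by rewrite inE Dy /der1_part normal_word_gen mulgV group1.
Qed.

Definition lift_row g : 'rV['F_p]_d :=
  \row_(a < d) - \sum_(b < d | (a < b)%N) sigma [~ y b, y a] * delta b g.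

Lemma collect_sum_lift_row g h :
  \sum_(i < d) \sum_(j < i)
     sigma [~ gen_seq i, gen_seq j] *+ (delta_exps g i * delta_exps h j)
  = - \sum_(a < d) lift_row g 0 a * delta a h.
Proof.
rewrite -sumrN.
under [RHS]eq_bigr => a _ do rewrite mxE mulNr opprK mulr_suml.
rewrite [RHS](exchange_big_dep xpredT) //; apply: eq_bigr => b _.
rewrite (big_ord_widen d (fun j => sigma [~ gen_seq b, gen_seq j] *+
  (delta_exps g b * delta_exps h j))); last exact: ltnW (ltn_ord b).
apply: eq_bigr => a _; rewrite /gen_seq /delta_exps !valK /=.
by rewrite -mulr_natr natrM !natr_Zp mulrA.
Qed.

Lemma derivation_lift_Phi : exists tau : gT -> Amod p d,
  is_derivation D (Aact delta) tau /\
  forall x, x \in 'Phi(D) -> tau x = inS d (sigma x).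
Proof.
exists (fun g => (sigma (der1_part g), lift_row g)); split=> [g h Dg Dh | x Phi_x].
  have [D'cg D'ch] := (der1_part_mem Dg, der1_part_mem Dh).
  have [z D'z [-> sigma_z]] := der1_partM Dg Dh D'ch.
  move: (der1_part g) (der1_part h) D'cg D'ch => cg ch D'cg D'ch.
  have pairD (u v : Amod p d) : u + v = (u.1 + v.1, u.2 + v.2) by [].
  rewrite pairD /Aact /=; congr (_, _).
    by rewrite !sigmaM' ?groupM // sigma_z collect_sum_lift_row addrAC.
  apply/rowP => a; rewrite !mxE -opprD -big_split; congr (- _).
  by apply: eq_bigr => b _; rewrite deltaM // mulrDr.
congr (_, _); first by rewrite /der1_part normal_word_Phi // invg1 mulg1.
by apply/rowP => a; rewrite !mxE big1 ?oppr0 // => b _; rewrite delta_Phi ?mulr0.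
Qed.

End LiftToDerivation.

Theorem lemma3p7 (p d : nat) (gT : finGroupType) (D : {group gT})
  (y : 'I_d -> gT) (delta : 'I_d -> gT -> 'F_p) :
  prime p -> odd p -> (2 <= d)%N ->
  D :=: <<[set y i | i : 'I_d]>>%g ->
  exponent D = p ->
  nil_class D = 2%N ->
  #|(D / 'Phi(D))%g| = (p ^ d)%N ->
  #|('Phi(D) / 'L_3(D))%g| = (p ^ 'C(d, 2))%N ->
  (forall j g h, g \in D -> h \in D -> delta j (g * h)%g = delta j g + delta j h) ->
  (forall j i, delta j (y i) = (i == j)%:R) ->
  (forall tau : gT -> Amod p d,
     is_derivation D (Aact delta) tau ->
     (forall x, x \in ('Phi(D))%g -> tau x = inS d (tau x).1) /\
     is_derivation ('Phi(D))%g (@triv_act p gT) (fun x => (tau x).1)) /\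
  (forall sigma : gT -> 'F_p,
     is_derivation ('Phi(D))%g (@triv_act p gT) sigma ->
     exists tau : gT -> Amod p d,
       is_derivation D (Aact delta) tau /\
       forall x, x \in ('Phi(D))%g -> tau x = inS d (sigma x)).
Proof.
move=> p_pr _ _ defD expD classD _ _ deltaM delta_y.
have pD : p.-group D by rewrite -pnat_exponent expD pnat_id.
have cDD : D^`(1)%g \subset 'Z(D) by rewrite -nil_class2 classD.
split=> [tau tauM | sigma sigmaM]; first exact: derivation_Aact_Phi p_pr pD tauM.
by apply: (derivation_lift_Phi p_pr _ cDD defD deltaM delta_y sigmaM); rewrite expD.
Qed.
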